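(* Let $A=\prod_{i=1}^n A_i$ with each $A_i\in\{\mathsf P^1,\mathbb F_2\}$, with the product bicharacter, and let $\mathcal G,\mathcal M\subseteq A$ be subgroups with $\mathcal G\subseteq\mathcal M^\perp$. Set $\mathcal L=\mathcal G^\perp$ (so $\mathcal M\subseteq\mathcal L$). Let $R\subseteq[n]$ be a correctable region. Then every coset $[l]\in\mathcal L/\mathcal M$ has a representative $l\in\mathcal L$ with $\operatorname{supp}(l)\cap R=\emptyset$.
   Context: Bicharacter: on $\mathsf P^1=\{I,X,Y,Z\}$ (single-qubit Paulis modulo phase) $\langle a,b\rangle=+1$ if they commute, $-1$ otherwise; on $\mathbb F_2$, $\langle x,y\rangle=(-1)^{xy}$; on $A$ the coordinatewise product. $B^\perp=\{a\in A:\langle a,b\rangle=1\ \forall b\in B\}$. $\operatorname{supp}(a)=\{i:a_i\neq I\}$. A region $R\subseteq[n]$ is correctable if every $e\in\mathcal M^\perp$ with $\operatorname{supp}(e)\subseteq R$ belongs to $\mathcal G$. *)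

From mathcomp Require Import all_boot all_order all_algebra.
Set Implicit Arguments. Unset Strict Implicit. Unset Printing Implicit Defensive.
Import GRing.Theory.
Local Open Scope ring_scope.

(* Single-qubit Paulis modulo phase: P^1 = {I, X, Y, Z} (Klein four-group). *)
Inductive pauli := PI | PX | PY | PZ.

Definition pmul (a b : pauli) : pauli :=
  match a, b with
  | PI, c => c | c, PI => c
  | PX, PX => PI | PX, PY => PZ | PX, PZ => PY
  | PY, PX => PZ | PY, PY => PI | PY, PZ => PX
  | PZ, PX => PY | PZ, PY => PX | PZ, PZ => PI
  end.

Definition pcommute (a b : pauli) : bool :=
  match a, b with
  | PI, _ | _, PI => true
  | PX, PX | PY, PY | PZ, PZ => true
  | _, _ => false
  end.

(* Local factor: kind true = P^1, kind false = F_2. *)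
Definition loc (b : bool) : Type := if b then pauli else bool.

Definition locone (b : bool) : loc b :=
  match b as b0 return loc b0 with true => PI | false => false end.

Definition locmul (b : bool) : loc b -> loc b -> loc b :=
  match b as b0 return loc b0 -> loc b0 -> loc b0 with
  | true => pmul | false => addb end.

Definition locinv (b : bool) : loc b -> loc b :=
  match b as b0 return loc b0 -> loc b0 with
  | true => fun x => x | false => fun x => x end.

Definition locchar (b : bool) : loc b -> loc b -> int :=
  match b as b0 return loc b0 -> loc b0 -> int with
  | true => fun x y => if pcommute x y then 1 else -1
  | false => fun x y => if x && y then -1 else 1
  end.

Definition elt (n : nat) (k : 'I_n -> bool) : Type := forall i : 'I_n, loc (k i).

Definition aone n (k : 'I_n -> bool) : elt k := fun i => locone (k i).
Definition amul n (k : 'I_n -> bool) (a b : elt k) : elt k :=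
  fun i => locmul (a i) (b i).
Definition ainv n (k : 'I_n -> bool) (a : elt k) : elt k := fun i => locinv (a i).

Definition bichar n (k : 'I_n -> bool) (a b : elt k) : int :=
  \prod_(i < n) locchar (a i) (b i).

Definition is_subgroup n (k : 'I_n -> bool) (B : elt k -> Prop) : Prop :=
  [/\ B (aone k), (forall a b, B a -> B b -> B (amul a b))
    & (forall a, B a -> B (ainv a))].

Definition perp n (k : 'I_n -> bool) (B : elt k -> Prop) : elt k -> Prop :=
  fun a => forall b, B b -> bichar a b = 1.

Definition in_supp n (k : 'I_n -> bool) (a : elt k) (i : 'I_n) : Prop :=
  a i <> locone (k i).

Definition correctable n (k : 'I_n -> bool) (G M : elt k -> Prop)
    (R : {set 'I_n}) : Prop :=
  forall e, perp M e -> (forall i, in_supp e i -> i \in R) -> G e.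

(* Encode A as F_2^(2n) with a nondegenerate symmetric F_2-valued form whose
   sign is the bicharacter.  For a subgroup H of a finite abelian group with
   such a form, summing signs in two ways gives |H| |H^perp| = |A|, hence
   H^perp^perp = H.  Take H = M|_R, the restrictions to R of the elements of M.
   Restricting to R is self-adjoint, so for e in H^perp the element e|_R lies
   in M^perp and is supported in R; by correctability it lies in G, hence is
   orthogonal to l, i.e. l|_R is orthogonal to e.  Thus l|_R lies in
   H^perp^perp = H, so l|_R = m|_R for some m in M, and l m^-1 vanishes on R;
   it is still in G^perp because M is contained in G^perp. *)

From HB Require Import structures.
From mathcomp Require Import all_boot all_order all_algebra all_fingroup boolp.
Set Implicit Arguments. Unset Strict Implicit. Unset Printing Implicit Defensive.
Import GRing.Theory Num.Theory.
Local Open Scope ring_scope.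

(* Pairs and finite functions of finite zmodules are not declared finite
   zmodules (hence additive finite groups) by default. *)
HB.saturate prod.
HB.saturate finfun_of.

Lemma sumr_translate_opp (V : finZmodType) (R : numDomainType)
    (P : pred V) (F : V -> R) t :
  (forall a, P (t + a) = P a) -> (forall a, F (t + a) = - F a) ->
  \sum_(a | P a) F a = 0.
Proof.
move=> PtE FtE; apply/eqP; rewrite -[_ == 0]orFb -(mulrn_eq0 _ 2) mulr2n.
rewrite {2}(reindex_inj (addrI t)) /= (eq_big _ _ PtE (fun a _ => FtE a)).
by rewrite sumrN subrr.
Qed.

Section Annihilator.

Variables (V : finZmodType) (form : V -> V -> bool).
Hypothesis form_sym : forall u v, form u v = form v u.
Hypothesis formDr : forall u, {morph form u : v w / v + w}.
Hypothesis form_nondeg : forall v, v != 0 -> exists u, form u v.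

Lemma form0r u : form u 0 = false.
Proof. by have := formDr u 0 0; rewrite addr0; case: (form u 0). Qed.

Lemma formDl v : {morph form^~ v : u w / u + w}.
Proof. by move=> u w; rewrite /= !(form_sym _ v) formDr. Qed.

Definition annihilator (H : {set V}) : {set V} :=
  [set a | [forall h in H, ~~ form a h]].

Lemma annihilatorP (H : {set V}) a :
  reflect (forall h, h \in H -> form a h = false) (a \in annihilator H).
Proof.
rewrite inE; apply: (iffP forall_inP) => aH h /aH; first exact: negbTE.
by move->.
Qed.

Lemma group_set_annihilator (H : {set V}) : group_set (annihilator H).
Proof.
apply/group_setP; split.
  by apply/annihilatorP => h _; rewrite form_sym form0r.
move=> a b /annihilatorP aH /annihilatorP bH; apply/annihilatorP => h hH.
by rewrite [(a * b)%g]/(a + b) formDl aH ?bH.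
Qed.

Canonical annihilator_group (H : {set V}) := Group (group_set_annihilator H).

Lemma sum_sign_form_group (H : {group V}) a :
  \sum_(h in H) (-1) ^+ form a h = (if a \in annihilator H then #|H| else 0)%:Z.
Proof.
have [/annihilatorP aH | /annihilatorP aH] := ifPn.
  by rewrite (eq_bigr (fun _ => 1)) ?sumr_const ?natz // => h /aH ->.
have [h0 h0H ah0] : exists2 h0, h0 \in H & form a h0.
  apply/exists_inP; apply: contra_notT aH => /exists_inPn ah h hH.
  exact/negbTE/ah.
apply: (sumr_translate_opp (t := h0)) => [h | h]; first exact: groupMl.
by rewrite formDr ah0 signr_addb mulN1r.
Qed.

Lemma sum_sign_form h :
  \sum_a (-1) ^+ form a h = (if h == 0 then #|V| else 0)%:Z.
Proof.
have [-> | /form_nondeg[a0 a0h]] := eqVneq.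
  by rewrite (eq_bigr (fun _ => 1)) ?sumr_const ?natz // => a _; rewrite form0r.
apply: (sumr_translate_opp (t := a0)) => // a.
by rewrite formDl a0h signr_addb mulN1r.
Qed.

Lemma card_annihilator (H : {group V}) : (#|H| * #|annihilator H|)%N = #|V|.
Proof.
apply/eqP; rewrite -eqz_nat; apply/eqP.
transitivity (\sum_a \sum_(h in H) (-1) ^+ form a h : int).
  under eq_bigr do rewrite sum_sign_form_group (fun_if Posz).
  by rewrite -big_mkcond /= sumr_const -mulr_natr natz PoszM.
rewrite exchange_big /=; under eq_bigr do rewrite sum_sign_form.
by rewrite (bigD1 1%g) //= eqxx big1 ?addr0 // => h /andP[_ /negbTE ->].
Qed.

Lemma annihilatorK (H : {group V}) : annihilator (annihilator H) = H.
Proof.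
apply/esym/eqP; rewrite eqEcard; apply/andP; split.
  apply/subsetP => h hH; apply/annihilatorP => a /annihilatorP aH.
  by rewrite form_sym aH.
have Hgt0 : (0 < #|annihilator H|)%N by apply/card_gt0P; exists 1%g.
rewrite -(leq_pmul2l Hgt0) (card_annihilator (annihilator_group H)).
by rewrite mulnC card_annihilator.
Qed.

End Annihilator.

Arguments annihilatorP {V form H a}.

Section ProductForm.

Variables (I : finType) (W : finZmodType) (f : I -> W -> W -> bool).
Hypothesis f_sym : forall i p q, f i p q = f i q p.
Hypothesis fDr : forall i p, {morph f i p : q r / q + r}.
Hypothesis f_nondeg : forall i q, q != 0 -> exists p, f i p q.

Let V : finZmodType := {ffun I -> W}.

Definition pform (u v : V) : bool := \sum_i f i (u i) (v i).

Lemma pform_sym u v : pform u v = pform v u.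
Proof. by apply: eq_bigr => i _; rewrite f_sym. Qed.

Lemma pformDr u : {morph pform u : v w / v + w}.
Proof.
by move=> v w; rewrite /pform -big_split; apply: eq_bigr => i _; rewrite ffunE fDr.
Qed.

Let f0l i q : f i 0 q = false.
Proof. by rewrite f_sym (form0r (fDr i)). Qed.

Lemma pform_nondeg v : v != 0 -> exists u, pform u v.
Proof.
move=> v_neq0; have [i vi_neq0] : exists i, v i != 0.
  apply/existsP; apply: contraNT v_neq0 => /existsPn vi0.
  by apply/eqP/ffunP => i; rewrite ffunE; apply/eqP/negPn.
have [p fpvi] := f_nondeg i vi_neq0.
exists [ffun j => if j == i then p else 0]; rewrite /pform (bigD1 i) //=.
rewrite ffunE eqxx fpvi big1 // => j /negbTE ji.
by rewrite ffunE ji f0l.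
Qed.

Definition restr (R : {set I}) (v : V) : V :=
  [ffun i => if i \in R then v i else 0].

Lemma restrD R : {morph restr R : u v / u + v}.
Proof. by move=> u v; apply/ffunP => i; rewrite !ffunE; case: ifP; rewrite ?addr0. Qed.

Lemma pform_restr R u v : pform (restr R u) v = pform u (restr R v).
Proof.
apply: eq_bigr => i _; rewrite !ffunE.
by case: ifP; rewrite ?f0l ?(form0r (fDr i)).
Qed.

Lemma group_set_restr (M : {group V}) R : group_set (restr R @: M).
Proof.
apply/group_setP; split.
  by apply/imsetP; exists 1%g => //; apply/ffunP => i; rewrite !ffunE if_same.
move=> _ _ /imsetP[u uM ->] /imsetP[v vM ->]; apply/imsetP.
by exists (u * v)%g; [exact: groupM | rewrite [(u * v)%g]/(u + v) restrD].
Qed.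

Lemma exists_clean (M : {group V}) (R : {set I}) (x : V) :
    (forall e : V, {in ~: R, forall i, e i = 0} -> e \in annihilator pform M ->
       pform x e = false) ->
  exists2 m, m \in M & {in R, forall i, x i + m i = 0}.
Proof.
move=> x_annR.
have : restr R x \in restr R @: M.
  rewrite -(annihilatorK pform_sym pformDr pform_nondeg (Group (group_set_restr M R))).
  apply/annihilatorP => e /annihilatorP e_ann; rewrite pform_restr.
  apply: x_annR => [i | ]; first by rewrite inE !ffunE => /negbTE ->.
  apply/annihilatorP => m mM; rewrite pform_restr e_ann //.
  exact: imset_f.
case/imsetP => m mM xRm; exists m^-1%g; first by rewrite groupV.
move=> i iR; have := congr1 (fun y : V => y i) xRm; rewrite !ffunE iR => ->.
exact: subrr.
Qed.

End ProductForm.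

(* Paulis are encoded as X = (1,0), Z = (0,1) with the symplectic form; F_2 is
   padded to F_2 x 0 and given the dot product, so that every local form is
   nondegenerate. *)
Definition lform (b : bool) (p q : bool * bool) : bool :=
  if b then p.1 * q.2 + p.2 * q.1 else p.1 * q.1 + p.2 * q.2.

Lemma lform_sym b p q : lform b p q = lform b q p.
Proof. by case: b; case: p => [[] []]; case: q => [[] []]. Qed.

Lemma lformDr b p : {morph lform b p : q r / q + r}.
Proof.
by move=> q r; case: b; case: p => [[] []]; case: q => [[] []]; case: r => [[] []].
Qed.

Lemma lform_nondeg b q : q != 0 -> exists p, lform b p q.
Proof.
case: b; case: q => [[] []] // _;
  by [exists (true, false) | exists (false, true)].
Qed.

Definition enc (b : bool) : loc b -> bool * bool :=
  match b as b0 return loc b0 -> bool * bool with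
  | true => fun p => match p with
            | PI => (false, false) | PX => (true, false)
            | PY => (true, true) | PZ => (false, true) end
  | false => fun x => (x, false)
  end.

Definition dec (b : bool) : bool * bool -> loc b :=
  match b as b0 return bool * bool -> loc b0 with
  | true => fun q => match q with
            | (false, false) => PI | (true, false) => PX
            | (true, true) => PY | (false, true) => PZ end
  | false => fun q => q.1
  end.

Lemma enc_inj b : injective (@enc b).
Proof. by case: b => [[] []|[] []]. Qed.

Lemma enc_one b : enc (locone b) = 0.
Proof. by case: b. Qed.

Lemma enc_mul b (x y : loc b) : enc (locmul x y) = enc x + enc y.
Proof. by case: b x y => [[] []|[] []]. Qed.

Lemma locchar_enc b (x y : loc b) : locchar x y = (-1) ^+ lform b (enc x) (enc y).
Proof. by case: b x y => [[] []|[] []]. Qed.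

Lemma lform_dec b q (y : loc b) : lform b (enc (dec b q)) (enc y) = lform b q (enc y).
Proof. by case: b y => [[]|[]]; case: q => [[] []]. Qed.

Lemma dec0 b : dec b 0 = locone b.
Proof. by case: b. Qed.

Lemma locchar_sym b (x y : loc b) : locchar x y = locchar y x.
Proof. by case: b x y => [[] []|[] []]. Qed.

Lemma locchar_mull b (x y z : loc b) : locchar (locmul x y) z = locchar x z * locchar y z.
Proof. by case: b x y z => [[] [] []|[] [] []]. Qed.

Section Encoding.

Variables (n : nat) (k : 'I_n -> bool).

Let V : finZmodType := {ffun 'I_n -> bool * bool}.
Local Notation form := (pform (fun i => lform (k i))).

Let form_sym : forall u v, form u v = form v u :=
  pform_sym (fun i => lform_sym (k i)).

Lemma bichar_sym (a b : elt k) : bichar a b = bichar b a.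
Proof. by apply: eq_bigr => i _; rewrite locchar_sym. Qed.

Lemma bichar_mull (a b c : elt k) : bichar (amul a b) c = bichar a c * bichar b c.
Proof. by rewrite /bichar -big_split; apply: eq_bigr => i _; rewrite locchar_mull. Qed.

Definition encode (a : elt k) : V := [ffun i => enc (a i)].

Definition decode (v : V) : elt k := fun i => dec (k i) (v i).

Lemma encode_mul a b : encode (amul a b) = encode a + encode b.
Proof. by apply/ffunP => i; rewrite !ffunE enc_mul. Qed.

Lemma in_supp_encode a i : in_supp a i <-> encode a i != 0.
Proof.
rewrite ffunE -(enc_one (k i)) /in_supp; split => [a_neq | /eqP enc_neq a_eq].
  by apply/eqP => /enc_inj.
by apply: enc_neq; rewrite a_eq.
Qed.

Lemma in_supp_decode e i : in_supp (decode e) i -> e i != 0.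
Proof. by apply: contra_notN => /eqP ei0; rewrite /in_supp /decode ei0 dec0. Qed.

Lemma bichar_decode a e : bichar a (decode e) = (-1) ^+ form (encode a) e.
Proof.
rewrite /bichar /pform.
rewrite (big_morph (fun b : bool => (-1) ^+ b : int) (@signr_addb _) (erefl _)).
by apply: eq_bigr => i _; rewrite ffunE locchar_enc lform_sym lform_dec lform_sym.
Qed.

Definition encoded (M : elt k -> Prop) : {set V} :=
  [set v | `[< exists2 m, M m & v = encode m >]].

Lemma group_set_encoded M : is_subgroup M -> group_set (encoded M).
Proof.
case=> M1 MM _; apply/group_setP; split.
  rewrite inE; apply/asboolP; exists (aone k) => //.
  by apply/ffunP => i; rewrite !ffunE enc_one.
move=> u v; rewrite !inE => /asboolP[a Ma ->] /asboolP[b Mb ->]; apply/asboolP.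
by exists (amul a b); [exact: MM | rewrite encode_mul].
Qed.

Lemma perp_decode M e : e \in annihilator form (encoded M) -> perp M (decode e).
Proof.
move=> /annihilatorP e_ann m Mm; rewrite bichar_sym bichar_decode form_sym e_ann //.
by rewrite inE; apply/asboolP; exists m.
Qed.

Lemma correctable_perp_form G M R l :
    correctable G M R -> perp G l ->
  forall e : V, {in ~: R, forall i, e i = 0} ->
    e \in annihilator form (encoded M) -> form (encode l) e = false.
Proof.
move=> corrR lG e e_out e_ann.
have eG : G (decode e).
  apply: corrR (perp_decode e_ann) _ => i /in_supp_decode; apply: contraNT => iR.
  by rewrite e_out ?inE.
by apply: (@signr_inj int); rewrite -bichar_decode lG.
Qed.

End Encoding.

Theorem lemma7 (n : nat) (k : 'I_n -> bool) (G M : elt k -> Prop)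
    (R : {set 'I_n}) :
  is_subgroup G -> is_subgroup M ->
  (forall g, G g -> perp M g) ->
  correctable G M R ->
  forall l, perp G l ->
  exists l' : elt k,
    perp G l' /\ (exists m, M m /\ l' = amul l m) /\
    (forall i, in_supp l' i -> i \notin R).
Proof.
move=> _ sgM GM corrR l lG.
have [v] := exists_clean (fun i => lform_sym (k i)) (fun i => lformDr (k i))
  (fun i => lform_nondeg (k i)) (M := Group (group_set_encoded sgM))
  (correctable_perp_form corrR lG).
rewrite inE => /asboolP[m Mm ->] lm_clean.
exists (amul l m); split; [|split].
- by move=> g Gg; rewrite bichar_mull lG // bichar_sym GM.
- by exists m.
- move=> i /in_supp_encode; apply: contraNN => iR.
  by rewrite encode_mul ffunE lm_clean.
Qed.
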